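(* If $k\ge2$ is an integer, there is no $k$-tuple $(a_1,\dots,a_k)$ of real numbers satisfying $$0<a_i<|a_1+\cdots+a_{i-1}-(a_{i+1}+\cdots+a_k)|\quad\text{for all }1\le i\le k.$$
   Context: Empty sums are zero. *)

From HB Require Import structures.
From mathcomp Require Import all_boot all_order all_algebra.
From mathcomp Require Import reals.

From HB Require Import structures.
From mathcomp Require Import all_boot all_order all_algebra.
From mathcomp Require Import reals.
From mathcomp Require Import lra.
Import Order.TTheory GRing.Theory Num.Theory.
Local Open Scope ring_scope.

(* With prefix sums L_n = a_1 + ... + a_n and total T, the i-th condition reads
   a_i < |2 L_{i-1} + a_i - T|.  If 2 L_{i-1} < T the quantity inside is below a_i,
   so it must be negative and then 2 L_i < T.  Starting from L_0 = 0 this propagates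
   up to 2 T = 2 L_k < T, so T <= 0, which is impossible for positive a_i. *)

Section PrefixSums.

Context {V : nmodType} {k : nat} (a : 'I_k -> V).

Definition prefix_sum (n : nat) : V := \sum_(j < k | (j < n)%N) a j.

Lemma prefix_sum0 : prefix_sum 0 = 0.
Proof. exact: big_pred0. Qed.

Lemma prefix_sumS (i : 'I_k) : prefix_sum i.+1 = prefix_sum i + a i.
Proof.
rewrite /prefix_sum (bigD1 i) ?ltnSn //= addrC; congr (_ + _).
by apply: eq_bigl => j; rewrite ltnS -val_eqE /= andbC -ltn_neqAle.
Qed.

Lemma prefix_sum_full : prefix_sum k = \sum_(j < k) a j.
Proof. by apply: eq_bigl => j; rewrite ltn_ord. Qed.

Lemma prefix_sum_add_suffix (i : 'I_k) :
  prefix_sum i.+1 + \sum_(j < k | (i < j)%N) a j = \sum_(j < k) a j.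
Proof.
rewrite [RHS](bigID (fun j : 'I_k => (j < i.+1)%N)) /=; congr (_ + _).
by apply: eq_bigl => j; rewrite -leqNgt.
Qed.

End PrefixSums.

Lemma imbalance_prefix_sum (V : zmodType) (k : nat) (a : 'I_k -> V) (i : 'I_k) :
  prefix_sum a i - \sum_(j < k | (i < j)%N) a j
    = prefix_sum a i *+ 2 + a i - \sum_(j < k) a j.
Proof.
rewrite -(prefix_sum_add_suffix a i) prefix_sumS opprD addrA; congr (_ - _).
by rewrite mulr2n addrAC addrKA subrK.
Qed.

Lemma half_total_step (R : realDomainType) (l x t : R) :
  l *+ 2 < t -> x < `|l *+ 2 + x - t| -> (l + x) *+ 2 < t.
Proof.
move=> twice_l_lt_t; have [ge0|lt0] := leP 0 (l *+ 2 + x - t).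
  by rewrite ger0_norm //; lra.
by rewrite ltr0_norm //; lra.
Qed.

Section BelowImbalance.

Context {R : realDomainType} {k : nat} (a : 'I_k -> R).

Hypothesis a_lt_imbalance : forall i : 'I_k,
  a i < `| \sum_(j < k | (j < i)%N) a j - \sum_(j < k | (i < j)%N) a j |.

Lemma prefix_sum_lt_half_total (n : nat) :
  0 < \sum_(j < k) a j -> (n <= k)%N -> prefix_sum a n *+ 2 < \sum_(j < k) a j.
Proof.
move=> total_gt0; elim: n => [|n IHn] n_le_k; first by rewrite prefix_sum0 mul0rn.
pose i := Ordinal n_le_k; rewrite (prefix_sumS a i).
apply: half_total_step; first exact/IHn/ltnW.
by rewrite -imbalance_prefix_sum; apply: a_lt_imbalance.
Qed.

Lemma total_le0_below_imbalance : \sum_(j < k) a j <= 0.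
Proof.
rewrite leNgt; apply/negP => total_gt0.
have := prefix_sum_lt_half_total _ total_gt0 (leqnn k).
by rewrite prefix_sum_full; lra.
Qed.

End BelowImbalance.

Theorem mainTheorem7 (R : realType) (k : nat) (hk : (2 <= k)%N) :
  ~ exists a : 'I_k -> R,
      forall i : 'I_k,
        0 < a i /\
        a i < `| \sum_(j < k | (j < i)%N) a j - \sum_(j < k | (i < j)%N) a j |.
Proof.
case=> a /all_and2[a_gt0 a_lt_imbalance].
have total0 : \sum_(j < k) a j = 0.
  apply/le_anti; rewrite total_le0_below_imbalance //=.
  by apply: sumr_ge0 => j _; apply: ltW.
have i0 : 'I_k := Ordinal (ltnW hk).
have := a_gt0 i0; rewrite (psumr_eq0P (fun j _ => ltW (a_gt0 j)) total0) //.
by rewrite ltxx.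
Qed.
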